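(* For every $y>0$, the function $H_a(y)=\Gamma(a,y)/\Gamma(a-1,y)$ is increasing as a function of $a\in\mathbb{R}$.
   Context: $\Gamma(a,y)=\int_y^{\infty} t^{a-1}e^{-t}\,dt$ is the upper incomplete gamma function, defined for all real $a$ when $y>0$. *)

From Stdlib Require Import Reals.
From Coquelicot Require Import Coquelicot.
Open Scope R_scope.

Definition upper_gamma (a y : R) : R :=
  RInt_gen (fun t => Rpower t (a - 1) * exp (- t))
           (at_point y) (Rbar_locally p_infty).

Definition H (a y : R) : R := upper_gamma a y / upper_gamma (a - 1) y.

(* With m := H_a(y) = Gamma(a,y) / Gamma(a-1,y) and c := b - a > 0, the integrand
   (t - m) (t^c - m^c) t^(a-2) e^(-t) is nonnegative on (y, +oo) and positive for t > m.
   Its integral over [y, +oo) is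
     Gamma(b,y) - m Gamma(b-1,y) - m^c (Gamma(a,y) - m Gamma(a-1,y)) = Gamma(b,y) - m Gamma(b-1,y),
   so Gamma(b,y) > m Gamma(b-1,y), i.e. H_b(y) > H_a(y). *)

From Stdlib Require Import Reals Lra Classical.
From Coquelicot Require Import Coquelicot.
Open Scope R_scope.

Lemma ln_le_sub1 (u : R) : 0 < u -> ln u <= u - 1.
Proof.
  intros Hu. rewrite <- (ln_exp (u - 1)). apply ln_le; [exact Hu|].
  generalize (exp_ineq1_le (u - 1)); lra.
Qed.

Lemma mul_ln_le_affine (y k : R) :
  0 < y -> exists C, forall t, y <= t -> k * ln t <= C + t / 2.
Proof.
  intros Hy. destruct (Rle_dec k 0) as [Hk|Hk].
  - exists (k * ln y). intros t Ht.
    assert (ln y <= ln t) by (apply ln_le; lra). nra.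
  - exists (k * ln (2 * k)). intros t Ht.
    (* [ln t = ln (2k) + ln (t / 2k)] and [k ln (t / 2k) <= t/2 - k]. *)
    replace (ln t) with (ln (2 * k) + ln (t / (2 * k))).
    2:{ rewrite <- ln_mult by (try apply Rdiv_lt_0_compat; lra). f_equal. field. lra. }
    assert (Hln := ln_le_sub1 (t / (2 * k)) ltac:(apply Rdiv_lt_0_compat; lra)).
    assert (k * ln (t / (2 * k)) <= k * (t / (2 * k) - 1)) by (apply Rmult_le_compat_l; lra).
    assert (k * (t / (2 * k) - 1) = t / 2 - k) by (field; lra).
    nra.
Qed.

Lemma increasing_bounded_cvg (y M : R) (f : R -> R) :
  (forall b b', y <= b -> b <= b' -> f b <= f b') ->
  (forall b, y <= b -> f b <= M) ->
  exists l, forall eps, 0 < eps ->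
    exists b0, y <= b0 /\ forall b, b0 <= b -> Rabs (f b - l) < eps.
Proof.
  intros Hmon HM.
  set (E := fun x => exists b, y <= b /\ x = f b).
  assert (HB : bound E) by (exists M; intros x [b [Hb ->]]; now apply HM).
  assert (HE : exists x, E x) by (exists (f y), y; split; [lra|reflexivity]).
  destruct (completeness E HB HE) as [l [Hub Hlub]].
  exists l. intros eps Heps.
  destruct (classic (exists b0, y <= b0 /\ l - eps < f b0)) as [[b0 [Hb0 Hf]]|Hnone].
  - exists b0. split; [exact Hb0|]. intros b Hb.
    assert (f b0 <= f b) by (apply Hmon; lra).
    assert (f b <= l) by (apply Hub; exists b; split; [lra|reflexivity]).
    apply Rabs_def1; lra.
  - assert (l <= l - eps); [|lra].
    apply Hlub. intros x [b [Hb ->]].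
    destruct (Rle_dec (f b) (l - eps)) as [|Hc]; [assumption|].
    exfalso; apply Hnone; exists b; split; [exact Hb|lra].
Qed.

Lemma mul_sub_Rpower_sub_ge_0 (t m c : R) :
  0 < t -> 0 < m -> 0 < c -> 0 <= (t - m) * (Rpower t c - Rpower m c).
Proof.
  intros Ht Hm Hc. destruct (Rtotal_order t m) as [Hlt|[->|Hgt]].
  - assert (Rpower t c < Rpower m c) by (apply Rlt_Rpower_l; lra). nra.
  - lra.
  - assert (Rpower m c < Rpower t c) by (apply Rlt_Rpower_l; lra). nra.
Qed.

Section IntegralOnRay.

Variable y : R.

Notation is_RInt_ray f l := (is_RInt_gen f (at_point y) (Rbar_locally p_infty) l).

Lemma ex_RInt_on_ray (f : R -> R) :
  (forall t, y <= t -> continuous f t) ->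
  forall a b, y <= a -> y <= b -> ex_RInt f a b.
Proof.
  intros Hc a b Ha Hb. apply (@ex_RInt_continuous R_CompleteNormedModule).
  intros z [Hz _]. apply Hc.
  eapply Rle_trans; [|exact Hz]. apply Rmin_glb; lra.
Qed.

Lemma RInt_increasing_on_ray (f : R -> R) :
  (forall t, y <= t -> continuous f t) -> (forall t, y < t -> 0 <= f t) ->
  forall b b', y <= b -> b <= b' -> RInt f y b <= RInt f y b'.
Proof.
  intros Hc Hp b b' Hb Hb'.
  rewrite <- (RInt_Chasles f y b b') by (apply ex_RInt_on_ray; auto; lra).
  assert (0 <= RInt f b b').
  { apply RInt_ge_0; [lra | apply ex_RInt_on_ray; auto; lra |].
    intros x Hx; apply Hp; lra. }
  change (plus (RInt f y b) (RInt f b b')) with (RInt f y b + RInt f b b'). lra.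
Qed.

Lemma is_RInt_ray_of_RInt_cvg (f : R -> R) (l : R) :
  (forall b, y <= b -> ex_RInt f y b) ->
  (forall eps, 0 < eps ->
     exists b0, y <= b0 /\ forall b, b0 <= b -> Rabs (RInt f y b - l) < eps) ->
  is_RInt_ray f l.
Proof.
  intros Hex Hcvg P [eps HP].
  destruct (Hcvg eps (cond_pos eps)) as [b0 [Hb0 Hb]].
  apply (Filter_prod _ _ _ (fun x => x = y) (fun z => b0 < z)).
  - reflexivity.
  - exists b0. auto.
  - intros x z -> Hz. exists (RInt f y z). split.
    + apply (RInt_correct f y z), Hex; lra.
    + apply HP, Hb. lra.
Qed.

Lemma is_RInt_ray_approx (f : R -> R) (l : R) :
  is_RInt_ray f l ->
  forall eps, 0 < eps ->
    exists M, forall z, M < z -> exists v, is_RInt f y z v /\ Rabs (v - l) < eps.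
Proof.
  intros Hl eps Heps.
  destruct (Hl (ball l (mkposreal eps Heps)) (locally_ball _ _)) as [Q R HQ [M HR] HP].
  exists M. intros z Hz. destruct (HP y z HQ (HR z Hz)) as [v [Hv Hball]].
  exists v. split; [exact Hv | exact Hball].
Qed.

Lemma ex_RInt_ray_of_bounded (f : R -> R) (M : R) :
  (forall t, y <= t -> continuous f t) -> (forall t, y < t -> 0 <= f t) ->
  (forall b, y <= b -> RInt f y b <= M) ->
  exists l, is_RInt_ray f l.
Proof.
  intros Hc Hp HM.
  destruct (increasing_bounded_cvg y M (fun b => RInt f y b)) as [l Hl];
    [exact (RInt_increasing_on_ray f Hc Hp) | exact HM |].
  exists l. apply is_RInt_ray_of_RInt_cvg; [|exact Hl].
  intros b Hb; apply ex_RInt_on_ray; auto; lra.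
Qed.

Lemma RInt_le_is_RInt_ray (f : R -> R) (l : R) :
  is_RInt_ray f l ->
  (forall t, y <= t -> continuous f t) -> (forall t, y < t -> 0 <= f t) ->
  forall b, y <= b -> RInt f y b <= l.
Proof.
  intros Hl Hc Hp b Hb. destruct (Rle_dec (RInt f y b) l) as [|Hgt]; [assumption|].
  destruct (is_RInt_ray_approx f l Hl (RInt f y b - l) ltac:(lra)) as [M HM].
  destruct (HM (Rmax b M + 1) ltac:(generalize (Rmax_r b M); lra)) as [v [Hv Hvl]].
  apply (@is_RInt_unique R_CompleteNormedModule) in Hv. subst v.
  assert (RInt f y b <= RInt f y (Rmax b M + 1)).
  { apply RInt_increasing_on_ray; auto. generalize (Rmax_l b M); lra. }
  apply Rabs_def2 in Hvl. lra.
Qed.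

Lemma is_RInt_ray_gt_0 (f : R -> R) (l z : R) :
  is_RInt_ray f l ->
  (forall t, y <= t -> continuous f t) -> (forall t, y < t -> 0 <= f t) ->
  y <= z -> (forall t, z < t -> 0 < f t) ->
  0 < l.
Proof.
  intros Hl Hc Hp Hz Hpos.
  eapply Rlt_le_trans; [|apply (RInt_le_is_RInt_ray f l Hl Hc Hp (z + 1)); lra].
  rewrite <- (RInt_Chasles f y z (z + 1)) by (apply ex_RInt_on_ray; auto; lra).
  change (plus ?u ?v) with (u + v).
  assert (0 <= RInt f y z).
  { apply RInt_ge_0; [lra | apply ex_RInt_on_ray; auto; lra |].
    intros; apply Hp; lra. }
  assert (0 < RInt f z (z + 1)).
  { apply RInt_gt_0; [lra | intros; apply Hpos; lra | intros; apply Hc; lra]. }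
  lra.
Qed.

Lemma is_RInt_ray_ext (f g : R -> R) (l : R) :
  (forall t, y < t -> f t = g t) -> is_RInt_ray f l -> is_RInt_ray g l.
Proof.
  intros Hfg. apply is_RInt_gen_ext.
  apply (Filter_prod _ _ _ (fun x => x = y) (fun z => y < z)).
  - reflexivity.
  - exists y. auto.
  - intros x z -> Hz t [Ht _]. simpl in Ht. rewrite Rmin_left in Ht by lra.
    apply Hfg. exact Ht.
Qed.

End IntegralOnRay.

Definition gamma_integrand (a t : R) : R := Rpower t (a - 1) * exp (- t).

Lemma gamma_integrand_gt_0 (a t : R) : 0 < gamma_integrand a t.
Proof. unfold gamma_integrand, Rpower. apply Rmult_lt_0_compat; apply exp_pos. Qed.

Lemma continuous_gamma_integrand (a t : R) : 0 < t -> continuous (gamma_integrand a) t.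
Proof.
  intros Ht. apply (@ex_derive_continuous R_AbsRing R_NormedModule).
  unfold gamma_integrand, Rpower. auto_derive. lra.
Qed.

Lemma gamma_integrand_le_exp_half (y a : R) :
  0 < y -> exists K, forall t, y <= t -> gamma_integrand a t <= K * exp (- t / 2).
Proof.
  intros Hy. destruct (mul_ln_le_affine y (a - 1) Hy) as [C HC].
  exists (exp C). intros t Ht.
  unfold gamma_integrand, Rpower. rewrite <- !exp_plus.
  destruct (Rle_lt_or_eq_dec ((a - 1) * ln t + - t) (C + - t / 2)) as [Hlt | ->].
  - generalize (HC t Ht); lra.
  - left; apply exp_increasing, Hlt.
  - right; reflexivity.
Qed.

Lemma RInt_exp_half_le (y b K : R) :
  y <= b -> 0 <= K -> RInt (fun t => K * exp (- t / 2)) y b <= 2 * K * exp (- y / 2).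
Proof.
  intros Hb HK.
  assert (Hprim : is_RInt (fun t => K * exp (- t / 2)) y b
     (-2 * K * exp (- b / 2) - -2 * K * exp (- y / 2))).
  { apply (@is_RInt_derive R_CompleteNormedModule (fun t => -2 * K * exp (- t / 2))).
    - intros x _. auto_derive; [exact I | lra].
    - intros x _. apply (@ex_derive_continuous R_AbsRing R_NormedModule).
      auto_derive. exact I. }
  rewrite (@is_RInt_unique R_CompleteNormedModule _ _ _ _ Hprim).
  assert (0 < exp (- b / 2)) by apply exp_pos. nra.
Qed.

Lemma is_RInt_gen_upper_gamma (y a : R) :
  0 < y ->
  is_RInt_gen (gamma_integrand a) (at_point y) (Rbar_locally p_infty) (upper_gamma a y).
Proof.
  intros Hy.
  assert (Hc : forall t, y <= t -> continuous (gamma_integrand a) t)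
    by (intros; apply continuous_gamma_integrand; lra).
  destruct (gamma_integrand_le_exp_half y a Hy) as [K HK].
  assert (HK0 : 0 <= K).
  { generalize (HK y (Rle_refl _)) (gamma_integrand_gt_0 a y) (exp_pos (- y / 2)). nra. }
  destruct (ex_RInt_ray_of_bounded y (gamma_integrand a) (2 * K * exp (- y / 2)))
    as [l Hl]; [exact Hc | intros; left; apply gamma_integrand_gt_0 | |].
  - intros b Hb. eapply Rle_trans; [|apply (RInt_exp_half_le y b K Hb HK0)].
    apply RInt_le; [exact Hb | apply (ex_RInt_on_ray y); auto; lra | |].
    + apply (@ex_RInt_continuous R_CompleteNormedModule). intros z _.
      apply (@ex_derive_continuous R_AbsRing R_NormedModule). auto_derive. exact I.
    + intros x Hx. apply HK. lra.
  - replace (upper_gamma a y) with l; [exact Hl |].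
    symmetry; exact (is_RInt_gen_unique (gamma_integrand a) l Hl).
Qed.

Lemma upper_gamma_gt_0 (y a : R) : 0 < y -> 0 < upper_gamma a y.
Proof.
  intros Hy. apply (is_RInt_ray_gt_0 y (gamma_integrand a) _ y (is_RInt_gen_upper_gamma y a Hy)).
  - intros; apply continuous_gamma_integrand; lra.
  - intros; left; apply gamma_integrand_gt_0.
  - lra.
  - intros; apply gamma_integrand_gt_0.
Qed.

Lemma gamma_integrand_comb (a c m t : R) : 0 < t ->
  gamma_integrand (a + c) t - m * gamma_integrand (a + c - 1) t
    - Rpower m c * (gamma_integrand a t - m * gamma_integrand (a - 1) t)
  = (t - m) * (Rpower t c - Rpower m c) * gamma_integrand (a - 1) t.
Proof.
  intros Ht. unfold gamma_integrand.
  replace (a + c - 1 - 1) with (c + (a - 1 - 1)) by ring.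
  replace (a + c - 1) with (c + (a - 1 - 1) + 1) by ring.
  set (u := a - 1 - 1).
  replace (a - 1) with (u + 1) by (unfold u; ring).
  rewrite !Rpower_plus, Rpower_1 by exact Ht.
  ring.
Qed.

Lemma upper_gamma_comb_gt_0 (y a c m : R) : 0 < y -> 0 < c -> 0 < m ->
  0 < upper_gamma (a + c) y - m * upper_gamma (a + c - 1) y
      - Rpower m c * (upper_gamma a y - m * upper_gamma (a - 1) y).
Proof.
  intros Hy Hc Hm.
  set (h t := (t - m) * (Rpower t c - Rpower m c) * gamma_integrand (a - 1) t).
  assert (Hcomb : is_RInt_gen h (at_point y) (Rbar_locally p_infty)
    (upper_gamma (a + c) y - m * upper_gamma (a + c - 1) y
     - Rpower m c * (upper_gamma a y - m * upper_gamma (a - 1) y))).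
  { assert (G := fun p => is_RInt_gen_upper_gamma y p Hy).
    apply (is_RInt_ray_ext y (fun t =>
      gamma_integrand (a + c) t - m * gamma_integrand (a + c - 1) t
      - Rpower m c * (gamma_integrand a t - m * gamma_integrand (a - 1) t)) h).
    { intros t Ht; apply gamma_integrand_comb; lra. }
    exact (is_RInt_gen_minus _ _ _ _
      (is_RInt_gen_minus _ _ _ _ (G (a + c)) (is_RInt_gen_scal _ m _ (G (a + c - 1))))
      (is_RInt_gen_scal _ (Rpower m c) _
        (is_RInt_gen_minus _ _ _ _ (G a) (is_RInt_gen_scal _ m _ (G (a - 1)))))). }
  apply (is_RInt_ray_gt_0 y h _ (Rmax y m) Hcomb).
  - intros t Ht. apply (@ex_derive_continuous R_AbsRing R_NormedModule).
    unfold h, gamma_integrand, Rpower. auto_derive. repeat split; lra.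
  - intros t Ht. apply Rmult_le_pos.
    + apply mul_sub_Rpower_sub_ge_0; lra.
    + left; apply gamma_integrand_gt_0.
  - apply Rmax_l.
  - intros t Ht. generalize (Rmax_l y m) (Rmax_r y m); intros.
    assert (Rpower m c < Rpower t c) by (apply Rlt_Rpower_l; lra).
    apply Rmult_lt_0_compat; [apply Rmult_lt_0_compat; lra | apply gamma_integrand_gt_0].
Qed.

Theorem theorem9 (y : R) (hy : 0 < y) :
  forall a b : R, a < b -> H a y < H b y.
Proof.
  intros a b Hab.
  assert (Ga1 := upper_gamma_gt_0 y (a - 1) hy).
  assert (Gb1 := upper_gamma_gt_0 y (b - 1) hy).
  set (m := H a y).
  assert (Hm : 0 < m) by (apply Rdiv_lt_0_compat; auto using upper_gamma_gt_0).
  assert (Hzero : upper_gamma a y - m * upper_gamma (a - 1) y = 0)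
    by (unfold m, H; field; lra).
  assert (Hpos := upper_gamma_comb_gt_0 y a (b - a) m hy ltac:(lra) Hm).
  replace (a + (b - a)) with b in Hpos by ring.
  rewrite Hzero, Rmult_0_r, Rminus_0_r in Hpos.
  apply (Rlt_div_r m (upper_gamma b y) _ Gb1). lra.
Qed.
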